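(* Let $(X,\le)$ be a poset, $E$ an equivalence relation on $X$ with ${\le}\subseteq E$, and $\alpha:X\to X$ an order automorphism of $(X,\le)$ with $\alpha\subseteq E$. (i) If $0=\alpha\circ({\le}^c)^\smile=({\le}^c)^\smile\circ\alpha$, then $\langle\mathsf{Up}(\mathbf E),\cap,\cup,\circ,\le,0,{\sim},-\rangle$ is a distributive InFL-algebra. (ii) For a positive integer $n$, the algebra in (i) is $n$-periodic if and only if $|\alpha|=n$.
   Context: For binary relations: converse $R^\smile=\{(x,y)\mid(y,x)\in R\}$; composition $R\circ S=\{(x,y)\mid\exists z\,((x,z)\in R,(z,y)\in S)\}$. A function $\alpha$ is identified with its graph; $\alpha^0=\mathrm{id}_X$, $\alpha^{k+1}=\alpha^k\circ\alpha$, and the order $|\alpha|$ is the smallest positive integer $k$ with $\alpha^k=\mathrm{id}_X$. For a poset $(X,\le)$ and an equivalence relation $E\supseteq{\le}$, $E$ is partially ordered by $(u,v)\preceq(x,y)$ iff $x\le u$ and $v\le y$; $\mathbf E=(E,\preceq)$ and $\mathsf{Up}(\mathbf E)$ is its set of up-sets (a distributive lattice under $\cap,\cup$; it is closed under $\circ$ with identity $\le$). For $R\subseteq E$, $R^c=E\setminus R$. Residuals: $R\backslash S=(R^\smile\circ S^c)^c$, $R/S=(R^c\circ S^\smile)^c$; ${\sim}R=R\backslash 0$, $-R=0/R$. An FL-algebra is a residuated lattice with an extra constant $0$; it is InFL if ${\sim}{-}a={-}{\sim}a=a$ for all $a$; it is $n$-periodic if $n$ is the smallest positive integer with ${\sim}^na=-^na$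 for all $a$. An order automorphism is a bijection $\alpha$ with $x\le y\iff\alpha(x)\le\alpha(y)$. *)

From Stdlib Require Import Arith.

Set Implicit Arguments.

Definition relation (X : Type) := X -> X -> Prop.

Section Rel.
Variable X : Type.

Definition conv (R : relation X) : relation X := fun x y => R y x.
Definition comp (R S : relation X) : relation X :=
  fun x y => exists z, R x z /\ S z y.
Definition graph (f : X -> X) : relation X := fun x y => f x = y.
Definition complE (E R : relation X) : relation X := fun x y => E x y /\ ~ R x y.
Definition capR (R S : relation X) : relation X := fun x y => R x y /\ S x y.
Definition cupR (R S : relation X) : relation X := fun x y => R x y \/ S x y.
Definition ldivR (E R S : relation X) : relation X :=
  complE E (comp (conv R) (complE E S)).
Definition rdivR (E R S : relation X) : relation X :=
  complE E (comp (complE E R) (conv S)).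

Definition is_poset (le : relation X) : Prop :=
  (forall x, le x x) /\ (forall x y, le x y -> le y x -> x = y) /\
  (forall x y z, le x y -> le y z -> le x z).
Definition is_equivalence (E : relation X) : Prop :=
  (forall x, E x x) /\ (forall x y, E x y -> E y x) /\
  (forall x y z, E x y -> E y z -> E x z).
Definition order_automorphism (le : relation X) (a : X -> X) : Prop :=
  (forall x y, a x = a y -> x = y) /\ (forall y, exists x, a x = y) /\
  (forall x y, le x y <-> le (a x) (a y)).

(* R in Up(E): R is a subset of E and an up-set w.r.t.
   (u,v) <= (x,y) iff x <= u and v <= y *)
Definition UpE (le E : relation X) (R : relation X) : Prop :=
  (forall x y, R x y -> E x y) /\
  (forall u v x y, R u v -> le x u -> le v y -> R x y).

Definition fun_order (a : X -> X) (n : nat) : Prop :=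
  0 < n /\ (forall x, Nat.iter n a x = x) /\
  (forall k, 0 < k < n -> ~ (forall x, Nat.iter k a x = x)).
End Rel.

Section Alg.
Variables (A : Type) (U : A -> Prop)
  (meet join mul : A -> A -> A) (one zero : A) (ldiv rdiv : A -> A -> A).

Definition lat_le (x y : A) : Prop := meet x y = x.

Definition FL_algebra : Prop :=
  U one /\ U zero /\
  (forall x y, U x -> U y ->
     U (meet x y) /\ U (join x y) /\ U (mul x y) /\ U (ldiv x y) /\ U (rdiv x y)) /\
  (forall x y, U x -> U y -> meet x y = meet y x /\ join x y = join y x) /\
  (forall x y z, U x -> U y -> U z ->
     meet x (meet y z) = meet (meet x y) z /\ join x (join y z) = join (join x y) z) /\
  (forall x y, U x -> U y -> meet x (join x y) = x /\ join x (meet x y) = x) /\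
  (forall x y z, U x -> U y -> U z -> mul x (mul y z) = mul (mul x y) z) /\
  (forall x, U x -> mul one x = x /\ mul x one = x) /\
  (forall x y z, U x -> U y -> U z ->
     (lat_le (mul x y) z <-> lat_le y (ldiv x z)) /\
     (lat_le (mul x y) z <-> lat_le x (rdiv z y))).

Definition lneg (x : A) : A := ldiv x zero.
Definition rneg (x : A) : A := rdiv zero x.

Definition distributive_InFL_algebra : Prop :=
  FL_algebra /\
  (forall x y z, U x -> U y -> U z -> meet x (join y z) = join (meet x y) (meet x z)) /\
  (forall x, U x -> lneg (rneg x) = x /\ rneg (lneg x) = x).

Definition periodic_at (k : nat) : Prop :=
  forall x, U x -> Nat.iter k lneg x = Nat.iter k rneg x.
Definition n_periodic (n : nat) : Prop :=
  0 < n /\ periodic_at n /\ (forall k, 0 < k < n -> ~ periodic_at k).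
End Alg.

(* Up-sets of E are closed under the lattice operations, composition and the
   residuals, and residuation holds because complements are taken inside E.
   For 0 = alpha o (<=^c)^~ one computes
     -R = {(x,y) in E | (y, alpha x) notin R},
     ~R = {(x,y) in E | there is no z with R z x and y <= alpha z},
   so ~ and - are mutually inverse and --R = {(x,y) | R (alpha x) (alpha y)}.
   Hence ~^k = -^k iff -^(2k) is the identity iff every up-set is invariant
   under alpha^k, and testing this on the principal up-set of (a,a) shows that
   this happens iff alpha^k = id. *)
From Stdlib Require Import Arith Classical FunctionalExtensionality
  PropExtensionality.

Lemma rel_ext {X : Type} (R S : relation X) :
  (forall x y, R x y <-> S x y) -> R = S.
Proof.
  intro H. apply functional_extensionality; intro x.
  apply functional_extensionality; intro y.
  apply propositional_extensionality, H.
Qed.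

Lemma lat_le_capR {X : Type} (R S : relation X) :
  lat_le (@capR X) R S <-> (forall x y, R x y -> S x y).
Proof.
  unfold lat_le; split.
  - intros H x y r. assert (c : capR R S x y) by (rewrite H; exact r).
    apply c.
  - intro H; apply rel_ext; intros x y; unfold capR; firstorder.
Qed.

Lemma capR_cupR_distr {X : Type} (R S T : relation X) :
  capR R (cupR S T) = cupR (capR R S) (capR R T).
Proof. apply rel_ext; intros x y; unfold capR, cupR; tauto. Qed.

Section UpSets.
Variables (X : Type) (le E : relation X).
Hypotheses (Hle : is_poset le) (HE : is_equivalence E)
  (HleE : forall x y, le x y -> E x y).

Local Notation Up := (UpE le E).

Lemma ord_refl x : le x x. Proof. apply Hle. Qed.
Lemma ord_trans x y z : le x y -> le y z -> le x z. Proof. apply Hle. Qed.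
Lemma ord_antisym x y : le x y -> le y x -> x = y. Proof. apply Hle. Qed.
Lemma eqv_sym x y : E x y -> E y x. Proof. apply HE. Qed.
Lemma eqv_trans x y z : E x y -> E y z -> E x z. Proof. apply HE. Qed.

Lemma Up_sub_E R x y : Up R -> R x y -> E x y.
Proof. intros [H _]; apply H. Qed.

Lemma Up_mono R u v x y : Up R -> R u v -> le x u -> le v y -> R x y.
Proof. intros [_ H]; apply H. Qed.

Lemma Up_mono_l R u x y : Up R -> R u y -> le x u -> R x y.
Proof. intros; eapply Up_mono; eauto using ord_refl. Qed.

Lemma Up_mono_r R x v y : Up R -> R x v -> le v y -> R x y.
Proof. intros; eapply Up_mono; eauto using ord_refl. Qed.

Lemma Up_le : Up le.
Proof. split; eauto using ord_trans. Qed.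

Lemma Up_capR R S : Up R -> Up S -> Up (capR R S).
Proof.
  intros HR HS; split; unfold capR.
  - intros x y [r _]; eauto using Up_sub_E.
  - intros u v x y [r s] ? ?; split; eapply Up_mono; eauto.
Qed.

Lemma Up_cupR R S : Up R -> Up S -> Up (cupR R S).
Proof.
  intros HR HS; split; unfold cupR.
  - intros x y [r|s]; eauto using Up_sub_E.
  - intros u v x y [r|s] ? ?; [left|right]; eapply Up_mono; eauto.
Qed.

Lemma Up_comp R S : Up R -> Up S -> Up (comp R S).
Proof.
  intros HR HS; split; unfold comp.
  - intros x y [z [r s]]; eauto using eqv_trans, Up_sub_E.
  - intros u v x y [z [r s]] ? ?; exists z; split;
    [eapply Up_mono_l | eapply Up_mono_r]; eauto.
Qed.

Lemma Up_ldivR R S : Up R -> Up S -> Up (ldivR E R S).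
Proof.
  intros HR HS; unfold ldivR, complE, comp, conv; split.
  - intros x y [H _]; exact H.
  - intros u v x y [Huv Hn] hxu hvy; split.
    + eauto using eqv_trans.
    + intros [z [Rzx [Ezy nS]]]. apply Hn. exists z; repeat split.
      * eapply Up_mono_r; eauto.
      * eauto using eqv_trans, eqv_sym.
      * intro c; apply nS; eapply Up_mono_r; eauto.
Qed.

Lemma Up_rdivR R S : Up R -> Up S -> Up (rdivR E R S).
Proof.
  intros HR HS; unfold rdivR, complE, comp, conv; split.
  - intros x y [H _]; exact H.
  - intros u v x y [Huv Hn] hxu hvy; split.
    + eauto using eqv_trans.
    + intros [z [[Exz nR] Syz]]. apply Hn. exists z; repeat split.
      * eauto using eqv_trans, eqv_sym.
      * intro c; apply nR; eapply Up_mono_l; eauto.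
      * eapply Up_mono_l; eauto.
Qed.

Lemma comp_le_l R : Up R -> comp le R = R.
Proof.
  intro HR; apply rel_ext; intros x y; split.
  - intros [z [l r]]; eapply Up_mono_l; eauto.
  - intro r; exists x; split; auto using ord_refl.
Qed.

Lemma comp_le_r R : Up R -> comp R le = R.
Proof.
  intro HR; apply rel_ext; intros x y; split.
  - intros [z [r l]]; eapply Up_mono_r; eauto.
  - intro r; exists y; split; auto using ord_refl.
Qed.

Lemma ldivR_residual R S T : Up R -> Up S ->
  (forall x y, comp R S x y -> T x y) <->
  (forall x y, S x y -> ldivR E R T x y).
Proof.
  intros HR HS; unfold ldivR, complE, comp, conv; split.
  - intros H x y Sxy; split; eauto using Up_sub_E.
    intros [z [Rzx [Ezy nT]]]; eauto.
  - intros H x y [z [Rxz Szy]]. destruct (H z y Szy) as [_ Hn].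
    apply NNPP; intro nT. apply Hn. exists x; repeat split; eauto using eqv_trans, Up_sub_E.
Qed.

Lemma rdivR_residual R S T : Up R -> Up S ->
  (forall x y, comp R S x y -> T x y) <->
  (forall x y, R x y -> rdivR E T S x y).
Proof.
  intros HR HS; unfold rdivR, complE, comp, conv; split.
  - intros H x y Rxy; split; eauto using Up_sub_E.
    intros [z [[Exz nT] Syz]]; eauto.
  - intros H x y [z [Rxz Szy]]. destruct (H x z Rxz) as [_ Hn].
    apply NNPP; intro nT. apply Hn. exists y; repeat split; eauto using eqv_trans, Up_sub_E.
Qed.

Lemma Up_FL_algebra Z : Up Z ->
  FL_algebra Up (@capR X) (@cupR X) (@comp X) le Z (ldivR E) (rdivR E).
Proof.
  intro HZ.
  split; [exact Up_le|]. split; [exact HZ|]. split.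
  { intros R S HR HS; split; [|split; [|split; [|split]]];
      auto using Up_capR, Up_cupR, Up_comp, Up_ldivR, Up_rdivR. }
  split.
  { intros R S _ _; split; apply rel_ext; unfold capR, cupR; tauto. }
  split.
  { intros R S T _ _ _; split; apply rel_ext; unfold capR, cupR; tauto. }
  split.
  { intros R S _ _; split; apply rel_ext; unfold capR, cupR; tauto. }
  split.
  { intros R S T _ _ _; apply rel_ext; unfold comp; firstorder. }
  split.
  { intros R HR; split; auto using comp_le_l, comp_le_r. }
  intros R S T HR HS _; rewrite !lat_le_capR; split.
  - now apply ldivR_residual.
  - now apply rdivR_residual.
Qed.

Definition principal_up (a : X) : relation X := fun x y => le x a /\ le a y.

Lemma Up_principal_up a : Up (principal_up a).
Proof.
  unfold principal_up; split.
  - intros x y [h1 h2]; eauto using ord_trans.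
  - intros u v x y [h1 h2] h3 h4; split; eauto using ord_trans.
Qed.

Lemma Up_invariant_iff (f : X -> X) :
  (forall R, Up R -> forall x y, R (f x) (f y) <-> R x y) <->
  (forall x, f x = x).
Proof.
  split.
  - intros H a. pose proof (Up_principal_up a) as Ha.
    assert (Hfa : principal_up a (f a) (f a)).
    { apply H; auto. split; apply ord_refl. }
    destruct Hfa; auto using ord_antisym.
  - intros Hf R _ x y. rewrite !Hf. reflexivity.
Qed.

Section Automorphism.
Variable alpha : X -> X.
Hypotheses (Halpha : order_automorphism le alpha)
  (HalphaE : forall x, E x (alpha x)).

Local Notation zero := (comp (graph alpha) (conv (complE E le))).
Local Notation lnegZ := (lneg zero (ldivR E)).
Local Notation rnegZ := (rneg zero (rdivR E)).

Lemma alpha_surj y : exists x, alpha x = y. Proof. apply Halpha. Qed.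
Lemma alpha_mono x y : le x y <-> le (alpha x) (alpha y). Proof. apply Halpha. Qed.

Lemma zero_iff x y : zero x y <-> E y (alpha x) /\ ~ le y (alpha x).
Proof.
  unfold comp, graph, conv, complE; split.
  - intros [z [<- H]]; exact H.
  - intro H; exists (alpha x); auto.
Qed.

Lemma Up_zero : Up zero.
Proof.
  split.
  - intros x y H. apply zero_iff in H as [H _].
    eauto using eqv_trans, eqv_sym.
  - intros u v x y H hxu hvy. apply zero_iff in H as [H1 H2].
    apply alpha_mono in hxu. apply zero_iff; split.
    + apply eqv_trans with v; [apply eqv_sym; auto|].
      apply eqv_trans with (alpha u); [exact H1|apply eqv_sym; auto].
    + intro c. eauto using ord_trans.
Qed.

Lemma rneg_iff R x y : Up R ->
  rnegZ R x y <-> E x y /\ ~ R y (alpha x).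
Proof.
  intro HR; unfold rneg, rdivR, complE, comp, conv; split.
  - intros [Exy Hn]; split; auto. intro Ry. apply Hn.
    exists (alpha x); repeat split; auto.
    intro HZ; apply zero_iff in HZ as [_ c]. apply c, ord_refl.
  - intros [Exy nR]; split; auto. intros [z [[Exz nZ] Ryz]]. apply nR.
    assert (lz : le z (alpha x)).
    { apply NNPP; intro c; apply nZ, zero_iff; eauto using eqv_trans, eqv_sym. }
    eapply Up_mono_r; eauto.
Qed.

Lemma lneg_iff R x y : Up R ->
  lnegZ R x y <-> E x y /\ ~ exists z, R z x /\ le y (alpha z).
Proof.
  intro HR; unfold lneg, ldivR, complE, comp, conv; split.
  - intros [Exy Hn]; split; auto. intros [z [Rzx lyz]]. apply Hn.
    exists z; repeat split; eauto using eqv_trans, Up_sub_E.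
    intro HZ; apply zero_iff in HZ as [_ c]; contradiction.
  - intros [Exy Hn]; split; auto. intros [z [Rzx [Ezy nZ]]]. apply Hn.
    exists z; split; auto.
    apply NNPP; intro c; apply nZ, zero_iff; eauto using eqv_trans, eqv_sym.
Qed.

Lemma Up_rneg R : Up R -> Up (rnegZ R).
Proof. intro; apply Up_rdivR; auto using Up_zero. Qed.

Lemma Up_lneg R : Up R -> Up (lnegZ R).
Proof. intro; apply Up_ldivR; auto using Up_zero. Qed.

Lemma lneg_rneg R : Up R -> lnegZ (rnegZ R) = R.
Proof.
  intro HR; apply rel_ext; intros x y.
  rewrite lneg_iff by auto using Up_rneg. split.
  - intros [Exy Hn]. apply NNPP; intro nR. apply Hn.
    destruct (alpha_surj y) as [z <-]. exists z; split.
    + apply rneg_iff; eauto using eqv_trans, eqv_sym.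
    + apply ord_refl.
  - intro Rxy; split; eauto using Up_sub_E. intros [z [Hz lyz]].
    apply rneg_iff in Hz as [_ nR]; auto. apply nR; eapply Up_mono_r; eauto.
Qed.

Lemma rneg_lneg R : Up R -> rnegZ (lnegZ R) = R.
Proof.
  intro HR; apply rel_ext; intros x y.
  rewrite rneg_iff by auto using Up_lneg. split.
  - intros [Exy Hn]. apply NNPP; intro nR; apply Hn, lneg_iff; auto.
    split; eauto using eqv_trans, eqv_sym.
    intros [z [Rzy lz]]. apply alpha_mono in lz.
    apply nR; eapply Up_mono_l; eauto.
  - intro Rxy; split; eauto using Up_sub_E. intro Hl.
    apply lneg_iff in Hl as [_ Hn]; auto. apply Hn.
    exists x; auto using ord_refl.
Qed.

Lemma rneg_rneg_iff R x y : Up R ->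
  rnegZ (rnegZ R) x y <-> R (alpha x) (alpha y).
Proof.
  intro HR. rewrite rneg_iff by auto using Up_rneg. split.
  - intros [Exy Hn]. apply NNPP; intro nR; apply Hn, rneg_iff; auto.
    eauto using eqv_trans, eqv_sym.
  - intro Raa; split.
    + eauto 6 using eqv_trans, eqv_sym, Up_sub_E.
    + intro c; apply rneg_iff in c as [_ c]; auto.
Qed.

Lemma Up_iter_rneg k R : Up R -> Up (Nat.iter k rnegZ R).
Proof. intro HR; induction k; simpl; auto using Up_rneg. Qed.

Lemma Up_iter_lneg k R : Up R -> Up (Nat.iter k lnegZ R).
Proof. intro HR; induction k; simpl; auto using Up_lneg. Qed.

Lemma iter_rneg_lneg k R : Up R -> Nat.iter k rnegZ (Nat.iter k lnegZ R) = R.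
Proof.
  intro HR; induction k as [|k IHk]; [reflexivity|].
  rewrite Nat.iter_succ_r, Nat.iter_succ, rneg_lneg; auto using Up_iter_lneg.
Qed.

Lemma iter_rneg_double k R x y : Up R ->
  Nat.iter (k + k) rnegZ R x y <->
  R (Nat.iter k alpha x) (Nat.iter k alpha y).
Proof.
  intro HR; revert x y; induction k as [|k IHk]; intros x y; [reflexivity|].
  rewrite Nat.add_succ_r; simpl Nat.iter at 1.
  rewrite rneg_rneg_iff, IHk by auto using Up_iter_rneg.
  rewrite !Nat.iter_succ_r. reflexivity.
Qed.

Lemma periodic_at_iff_iter_rneg_double k :
  periodic_at Up zero (ldivR E) (rdivR E) k <->
  (forall R, Up R -> Nat.iter (k + k) rnegZ R = R).
Proof.
  unfold periodic_at; split.
  - intros H R HR. rewrite Nat.iter_add, <- (H R HR).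
    apply iter_rneg_lneg; auto.
  - intros H R HR.
    rewrite <- (H (Nat.iter k lnegZ R)) by auto using Up_iter_lneg.
    rewrite Nat.iter_add, iter_rneg_lneg; auto.
Qed.

Lemma periodic_at_iff k :
  periodic_at Up zero (ldivR E) (rdivR E) k <->
  (forall x, Nat.iter k alpha x = x).
Proof.
  rewrite periodic_at_iff_iter_rneg_double, <- Up_invariant_iff. split.
  - intros H R HR x y. rewrite <- iter_rneg_double, H; tauto.
  - intros H R HR. apply rel_ext; intros x y.
    rewrite iter_rneg_double; auto.
Qed.

End Automorphism.
End UpSets.

Theorem theorem3p12 (X : Type) (le E : relation X) (alpha : X -> X)
  (Hle : is_poset le) (HE : is_equivalence E)
  (HleE : forall x y, le x y -> E x y)
  (Halpha : order_automorphism le alpha)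
  (HalphaE : forall x, E x (alpha x))
  (Hzero : forall x y,
     comp (graph alpha) (conv (complE E le)) x y <->
     comp (conv (complE E le)) (graph alpha) x y) :
  let zero := comp (graph alpha) (conv (complE E le)) in
  distributive_InFL_algebra (UpE le E) (@capR X) (@cupR X) (@comp X) le zero
    (ldivR E) (rdivR E)
  /\
  (forall n : nat, 0 < n ->
     (n_periodic (UpE le E) zero (ldivR E) (rdivR E) n
      <-> fun_order alpha n)).
Proof.
  intro zero; subst zero; split.
  - split; [|split].
    + apply Up_FL_algebra, Up_zero; auto.
    + intros R S T _ _ _; apply capR_cupR_distr.
    + intros R HR; split; [apply lneg_rneg | apply rneg_lneg]; auto.
  - intros n _; unfold n_periodic, fun_order.
    setoid_rewrite (periodic_at_iff _ _ _ Hle HE HleE _ Halpha HalphaE).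
    reflexivity.
Qed.
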